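(* Let $m$ be an odd positive integer and $q\geq 1$. Then $m*Q_q$ divides $Q_{mq}$.
   Context: $Q_q$ denotes the $q$-dimensional hypercube graph (vertices are $q$-tuples of $0$'s and $1$'s, adjacent iff they differ in exactly one coordinate). For a graph $G$ and positive integer $m$, the $m$-stretch $m*G$ is the graph obtained from $G$ by replacing each edge by a path with $m$ edges, these paths being internally vertex-disjoint. For graphs $H$ and $G$, ''$H$ divides $G$'' means there is a collection of subgraphs $H_i$ of $G$, each isomorphic to $H$, such that $E(G)$ is the disjoint union of the edge sets $E(H_i)$. *)

(* finite simple graphs as symmetric irreflexive boolean relations on finTypes. *)
From mathcomp Require Import all_boot.
Set Implicit Arguments. Unset Strict Implicit. Unset Printing Implicit Defensive.

Definition edges (V : finType) (e : rel V) : {set {set V}} :=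
  [set [set p.1; p.2] | p : V * V & e p.1 p.2].

(* A subgraph of (V,g) isomorphic to (W,h) is given by an injective map f : W -> V
   sending edges to edges; the subgraph is f(W) with edge set f(E(H)). *)
Definition is_copy (W V : finType) (h : rel W) (g : rel V) (f : W -> V) : Prop :=
  injective f /\ (forall x y, h x y -> g (f x) (f y)).

Definition copy_edges (W V : finType) (h : rel W) (f : W -> V) : {set {set V}} :=
  [set [set f p.1; f p.2] | p : W * W & h p.1 p.2].

Definition divides (W V : finType) (h : rel W) (g : rel V) : Prop :=
  exists (k : nat) (F : 'I_k -> W -> V),
    (forall i, is_copy h g (F i)) /\
    (forall i j : 'I_k, i != j -> [disjoint copy_edges h (F i) & copy_edges h (F j)]) /\
    \bigcup_(i < k) copy_edges h (F i) = edges g.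

Definition cube_adj (q : nat) : rel {ffun 'I_q -> bool} :=
  fun x y => #|[set i | x i != y i]| == 1.

(* Each edge {x,y} of G is represented once, as the pair (x,y)
   with enum_rank x < enum_rank y; it is replaced by the path
   x = p_0, p_1, ..., p_{m-1}, p_m = y whose interior vertices p_j (1 <= j <= m-1)
   are the new vertices inr (edge, j-1). *)
Section Stretch.
Variables (V : finType) (m : nat) (e : rel V).

Definition sedge := {p : V * V | e p.1 p.2 && (enum_rank p.1 < enum_rank p.2)}.

Definition svert := (V + (sedge * 'I_m.-1))%type.

Definition pathv (a : sedge) (j : nat) : svert :=
  if j == 0 then inl (val a).1
  else match insub j.-1 with
       | Some k => inr (a, k)
       | None => inl (val a).2
       end.

Definition stretch_adj : rel svert :=
  fun u v => [exists a : sedge, exists j : 'I_m,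
    ((u == pathv a j) && (v == pathv a j.+1)) ||
    ((v == pathv a j) && (u == pathv a j.+1))].
End Stretch.

(* For m = 2h+1 the edges of Q_m split into 2^(m-1) paths of length m from a word
   to its complement: starting from c with c(h) = 0, flip the middle coordinate at
   time h and the coordinates of each mirror pair {b, m-1-b} at the times b and
   m-1-b, in the order decided by whether c agrees on the pair.  Viewing Q_(mq) as
   (Q_m)^q, a choice of such words c_1, ..., c_q embeds m*Q_q: the vertex x of Q_q
   goes to the blocks c_j + x_j, and the subdivided edge in direction i runs the walk
   of c_i in block i.  An edge of Q_(mq) moves one block along an edge of Q_m, which
   lies on exactly one walk; this recovers c_i, and the other blocks recover the
   other c_j.  So the 2^((m-1)q) copies partition the edges of Q_(mq). *)

From mathcomp Require Import all_boot.
From mathcomp Require Import zify.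
Set Implicit Arguments. Unset Strict Implicit. Unset Printing Implicit Defensive.

Lemma eq_set2 (T : finType) (a b a' b' : T) :
  [set a; b] = [set a'; b'] -> (a = a' /\ b = b') \/ (a = b' /\ b = a').
Proof.
move=> E.
have : a \in [set a'; b'] by rewrite -E set21.
have : b \in [set a'; b'] by rewrite -E set22.
have : a' \in [set a; b] by rewrite E set21.
have : b' \in [set a; b] by rewrite E set22.
by do 4 (case/set2P=> ?); subst; auto.
Qed.

Section BooleanVectors.
Variable I : finType.
Implicit Types (w : {ffun I -> bool}) (p : I).

Definition flip_at w p : {ffun I -> bool} := [ffun b => w b (+) (b == p)].

Definition xor_const w (x : bool) : {ffun I -> bool} := [ffun b => w b (+) x].

Lemma flip_atK w p : flip_at (flip_at w p) p = w.
Proof. by apply/ffunP => b; rewrite !ffunE -addbA addbb addbF. Qed.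

Lemma flip_at_id w p p' : flip_at (flip_at w p) p' = w -> p = p'.
Proof.
by move/ffunP/(_ p); rewrite !ffunE eqxx -addbA; case: eqP => //; rewrite addbT; case: (w p).
Qed.

Lemma flip_at_neq w p : flip_at w p != w.
Proof. by apply/eqP => /ffunP/(_ p); rewrite ffunE eqxx; case: (w p). Qed.

Lemma flip_at_inj w : injective (flip_at w).
Proof. by move=> p p' E; apply: (@flip_at_id w); rewrite E flip_atK. Qed.

Lemma xor_constK w x : xor_const (xor_const w x) x = w.
Proof. by apply/ffunP => b; rewrite !ffunE -addbA addbb addbF. Qed.

Lemma xor_const_false w : xor_const w false = w.
Proof. by apply/ffunP => b; rewrite ffunE addbF. Qed.

Lemma xor_const_inj w w' x x' p :
  w p = w' p -> xor_const w x = xor_const w' x' -> w = w'.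
Proof.
move=> Ep E; have Ex : x = x' by move/ffunP/(_ p): E; rewrite !ffunE Ep; apply: addbI.
by rewrite -(xor_constK w x) E Ex xor_constK.
Qed.

End BooleanVectors.

Lemma cube_adjC n : symmetric (@cube_adj n).
Proof.
move=> x y; rewrite /cube_adj.
by have -> : [set i | x i != y i] = [set i | y i != x i] by apply/setP => i; rewrite !inE eq_sym.
Qed.

Lemma cube_adjP n (x y : {ffun 'I_n -> bool}) :
  reflect (exists p, y = flip_at x p) (cube_adj x y).
Proof.
apply: (iffP cards1P) => [[p Ep]|[p ->]]; exists p.
- apply/ffunP => j; have /setP/(_ j) := Ep; rewrite !inE ffunE.
  by case: (j == p); case: (x j); case: (y j).
- by apply/setP => j; rewrite !inE ffunE; case: (x j); case: (j == p).
Qed.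

Section AntipodalWalks.
Variable h : nat.
Local Notation m := h.*2.+1.
Local Notation word := {ffun 'I_m -> bool}.
Implicit Types (c w : word) (b p : 'I_m).

Lemma mid_subproof : h < m. Proof. lia. Qed.
Definition mid : 'I_m := Ordinal mid_subproof.

Definition flip_time c b : 'I_m := if c b == c (rev_ord b) then rev_ord b else b.

Definition walk c (t : nat) : word := [ffun b => c b (+) (flip_time c b < t)].

Lemma rev_ord_val b : val (rev_ord b) = h.*2 - b.
Proof. rewrite /=; lia. Qed.

Lemma rev_ord_mid : rev_ord mid = mid.
Proof. apply: val_inj; rewrite rev_ord_val /=; lia. Qed.

Lemma flip_timeP c b :
  (flip_time c b = rev_ord b /\ c b = c (rev_ord b)) \/
  (flip_time c b = b /\ c b != c (rev_ord b)).
Proof. by rewrite /flip_time; case: eqP; [left | right; split => //; apply/eqP]. Qed.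

Lemma flip_time_rev c b : flip_time c (rev_ord b) = rev_ord (flip_time c b).
Proof. by rewrite /flip_time rev_ordK eq_sym; case: eqP; rewrite ?rev_ordK. Qed.

Lemma flip_timeK c : involutive (flip_time c).
Proof.
by move=> b; case: (flip_timeP c b) => [[E _]|[E _]]; rewrite E // flip_time_rev E rev_ordK.
Qed.

Lemma flip_time_mid c : flip_time c mid = mid.
Proof. by rewrite /flip_time rev_ord_mid; case: eqP. Qed.

Lemma walkE c t b : walk c t b = c b (+) (flip_time c b < t).
Proof. by rewrite ffunE. Qed.

Lemma walk0 c : walk c 0 = c.
Proof. by apply/ffunP => b; rewrite walkE addbF. Qed.

Lemma walk_end c : walk c m = xor_const c true.
Proof. by apply/ffunP => b; rewrite walkE ffunE ltn_ord. Qed.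

Lemma walk_corner c (x : bool) : walk c (if x then m else 0) = xor_const c x.
Proof. by case: x; rewrite ?walk_end ?walk0 ?xor_const_false. Qed.

Lemma walkS c (t : 'I_m) : walk c t.+1 = flip_at (walk c t) (flip_time c t).
Proof.
apply/ffunP => b; rewrite !ffunE -addbA; congr (_ (+) _).
have -> : (b == flip_time c t) = (flip_time c b == t).
  by apply/eqP/eqP => [->|<-]; rewrite flip_timeK.
by rewrite ltnS leq_eqVlt -val_eqE; case: ltngtP.
Qed.

Lemma walk_inj c s s' : s <= m -> s' <= m -> walk c s = walk c s' -> s = s'.
Proof.
wlog lt_ss' : s s' / s < s'.
  move=> W Hs Hs' E; case: (ltngtP s s') => // H; [exact: W | exact/esym/W].
move=> _ Hs' /ffunP E; exfalso.
have Hsm : s < m by apply: leq_trans lt_ss' Hs'.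
move: (E (flip_time c (Ordinal Hsm))); rewrite !walkE flip_timeK /= ltnn lt_ss'.
by case: (c _).
Qed.

Lemma walkS_neq c (t : 'I_m) : walk c t != walk c t.+1.
Proof. apply/eqP => /walk_inj; have := ltn_ord t; lia. Qed.

(* Recovering a walk from one of its edges {w, flip_at w p}, for walks starting
   with [c mid = false]: as [mid] is flipped at time [h], [w mid] tells on which
   side of [h] the edge lies, which decides between the two candidate times [p]
   and [rev_ord p]. *)
Definition earlier w p : bool :=
  if p == mid then ~~ w mid else (w p == w (rev_ord p)) == (mid < p).

Definition crossing_time w p : nat :=
  if p == mid then h else if w mid then maxn p (rev_ord p) else minn p (rev_ord p).

Definition flipped_before w (t : nat) b : bool :=
  if (t <= b) && (t <= rev_ord b) then false
  else if (b < t) && (rev_ord b < t) then true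
  else (b <= rev_ord b) == (w b == w (rev_ord b)).

Definition walk_start w (t : nat) : word := [ffun b => w b (+) flipped_before w t b].

Lemma walk_startK c t : walk_start (walk c t) t = c.
Proof.
apply/ffunP => b; rewrite !ffunE -addbA.
suff -> : flipped_before (walk c t) t b = (flip_time c b < t) by rewrite addbb addbF.
rewrite /flipped_before !walkE flip_time_rev; have := ltn_ord b.
case: (flip_timeP c b) => [[-> Ec]|[-> Ec]]; rewrite ?rev_ordK !rev_ord_val.
- by rewrite -Ec; case: (c b); repeat case: ifP; lia.
- by move: Ec; case: (c b); case: (c (rev_ord b)) => //= _; repeat case: ifP; lia.
Qed.

Lemma walk_start_inj t w w' : walk_start w t = walk_start w' t -> w = w'.
Proof.
move=> /ffunP E; apply/ffunP => b; move: (E b) (E (rev_ord b)).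
rewrite !ffunE /flipped_before !rev_ordK !rev_ord_val; have := ltn_ord b.
by case: (w b); case: (w (rev_ord b)); case: (w' b); case: (w' (rev_ord b));
  repeat case: ifP; lia.
Qed.

Lemma crossing_time_walk c (t : 'I_m) :
  c mid = false -> crossing_time (walk c t) (flip_time c t) = t.
Proof.
move=> c_mid; rewrite /crossing_time walkE flip_time_mid c_mid /= -val_eqE.
have := ltn_ord t.
by case: (flip_timeP c t) => [[-> _]|[-> _]]; rewrite ?rev_ord_val ?rev_ordK /=;
  repeat case: ifP; lia.
Qed.

Lemma earlier_walk c (t : 'I_m) : c mid = false -> earlier (walk c t) (flip_time c t).
Proof.
move=> c_mid; rewrite /earlier !walkE flip_time_mid c_mid flip_timeK flip_time_rev.
rewrite flip_timeK -val_eqE; have := ltn_ord t.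
case: (flip_timeP c t) => [[-> Ec]|[-> Ec]]; rewrite ?rev_ordK ?rev_ord_val /=.
- by rewrite -Ec; case: (c t); repeat case: ifP; lia.
- by move: Ec; case: (c t); case: (c (rev_ord t)) => //= _; repeat case: ifP; lia.
Qed.

Lemma earlier_flip w p : earlier (flip_at w p) p = ~~ earlier w p.
Proof.
rewrite /earlier !ffunE eqxx; case: eqP => [->|p_mid]; first by rewrite eqxx; case: (w mid).
have -> : (rev_ord p == p) = false.
  apply/negP => /eqP/(congr1 val); rewrite rev_ord_val.
  by move/eqP: p_mid; rewrite -val_eqE /=; have := ltn_ord p; lia.
by case: (w p); case: (w (rev_ord p)); case: (mid < p).
Qed.

Lemma crossing_time_lt w p : crossing_time w p < m.
Proof. rewrite /crossing_time rev_ord_val; have := ltn_ord p; repeat case: ifP; lia. Qed.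

Lemma walk_start_walk w p : earlier w p ->
  let t := Ordinal (crossing_time_lt w p) in
  [/\ walk_start w t mid = false, walk (walk_start w t) t = w
    & flip_time (walk_start w t) t = p].
Proof.
move=> Hw t; have := ltn_ord p; split.
- rewrite ffunE /flipped_before rev_ord_mid /t /=.
  move: Hw; rewrite /earlier /crossing_time -val_eqE /= ?rev_ord_val.
  by case: (w mid); case: (w p); case: (w (rev_ord p)); repeat case: ifP; lia.
- by apply: (@walk_start_inj t); rewrite walk_startK.
- have Et : val t = crossing_time w p by [].
  have [Ep|Ep] : t = p \/ t = rev_ord p.
    have : val t = p \/ val t = rev_ord p.
      rewrite Et /crossing_time ?rev_ord_val; case: ifP => [/eqP->|_]; first by left.
      by case: ifP; lia.
    by case=> E; [left|right]; apply: val_inj.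
  all: rewrite Ep in Et *; rewrite /flip_time; case: ifP => Hc; apply: val_inj;
    rewrite /= ?rev_ord_val ?rev_ordK; move: Hc Hw Et;
    rewrite /earlier /crossing_time !ffunE /flipped_before !rev_ordK ?rev_ord_val /= -val_eqE /=;
    by case: (w mid); case: (w p); case: (w (rev_ord p)); repeat case: ifP; lia.
Qed.

Lemma walk_edge_unique c c' (t t' : 'I_m) : c mid = false -> c' mid = false ->
  [set walk c t; walk c t.+1] = [set walk c' t'; walk c' t'.+1] -> c = c'.
Proof.
move=> c_mid c'_mid; rewrite !walkS.
have Ec : c = walk_start (walk c t) (crossing_time (walk c t) (flip_time c t)).
  by rewrite crossing_time_walk // walk_startK.
have Ec' : c' = walk_start (walk c' t') (crossing_time (walk c' t') (flip_time c' t')).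
  by rewrite crossing_time_walk // walk_startK.
move: (earlier_walk t c_mid) (earlier_walk t' c'_mid) Ec Ec'.
move: (walk c t) (flip_time c t) (walk c' t') (flip_time c' t') => w p w' p' Hw Hw' -> ->.
case/eq_set2 => [[<- Ef]|[Ew Ef]].
  by rewrite (flip_at_inj Ef).
have Ep : p' = p by apply: (@flip_at_id _ w'); rewrite -Ew.
by move: Hw; rewrite Ew -Ep earlier_flip Hw'.
Qed.

Lemma walk_edge_cover w p : exists c (t : 'I_m),
  c mid = false /\ [set w; flip_at w p] = [set walk c t; walk c t.+1].
Proof.
pose w0 := if earlier w p then w else flip_at w p.
have Hw0 : earlier w0 p by rewrite /w0; case: ifP => // H; rewrite earlier_flip H.
have [c_mid walk_w0 flip_p] := walk_start_walk Hw0.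
set t := Ordinal _ in c_mid walk_w0 flip_p.
exists (walk_start w0 t), t; split => //.
by rewrite walkS walk_w0 flip_p /w0; case: ifP => _; rewrite ?flip_atK // setUC.
Qed.

End AntipodalWalks.

Lemma stretch_adjC (V : finType) (m : nat) (e : rel V) : symmetric (@stretch_adj V m e).
Proof.
by move=> u v; apply/existsP/existsP => -[a /existsP[j Ha]]; exists a;
  apply/existsP; exists j; rewrite orbC.
Qed.

Lemma stretch_adjP (V : finType) (m : nat) (e : rel V) (u v : svert m e) :
  @stretch_adj V m e u v -> exists (a : sedge e) (j : 'I_m),
  (u = pathv m a j /\ v = pathv m a j.+1) \/ (u = pathv m a j.+1 /\ v = pathv m a j).
Proof.
case/existsP => a /existsP[j /orP[]/andP[/eqP-> /eqP->]]; exists a, j; auto.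
Qed.

Lemma stretch_adj_path (V : finType) (m : nat) (e : rel V) (a : sedge e) (j : 'I_m) :
  @stretch_adj V m e (pathv m a j) (pathv m a j.+1).
Proof. by apply/existsP; exists a; apply/existsP; exists j; rewrite !eqxx. Qed.

Lemma sedge_of_edge (V : finType) (e : rel V) (x y : V) :
  e x y -> e y x -> x != y -> exists a : sedge e, val a = (x, y) \/ val a = (y, x).
Proof.
move=> Exy Eyx xy; case: (ltngtP (enum_rank x) (enum_rank y)) => [lt|lt|/val_inj/enum_rank_inj E].
- by exists (exist _ (x, y) (introT andP (conj Exy lt))); left.
- by exists (exist _ (y, x) (introT andP (conj Eyx lt))); right.
- by rewrite E eqxx in xy.
Qed.

Section StretchedCubeInGrid.
Variables m q : nat.
Hypothesis m_gt0 : 0 < m.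
Local Notation vertex := {ffun 'I_q -> bool}.
Local Notation point := {ffun 'I_q -> nat}.
Local Notation e := (@cube_adj q).
Implicit Types (x y : vertex) (i : 'I_q).

(* m*Q_q sits in the grid {0..m}^q: Q_q on the corners {0,m}^q, each edge
   subdivided along its axis. *)
Definition corner x : point := [ffun j => if x j then m else 0].

Definition axis_point x i (s : nat) : point := [ffun j => if j == i then s else corner x j].

Definition edge_point x y (s : nat) : point :=
  [ffun j => if x j then (if y j then m else m - s) else (if y j then s else 0)].

Definition stretch_point (v : svert m e) : point :=
  match v with
  | inl x => corner x
  | inr (a, k) => edge_point (val a).1 (val a).2 k.+1
  end.

Lemma corner_inj : injective corner.
Proof.
move=> x x' /ffunP E; apply/ffunP => j; move: (E j); rewrite !ffunE.
by case: (x j); case: (x' j) => //=; lia.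
Qed.

Lemma stretch_point_path (a : sedge e) s :
  s <= m -> stretch_point (pathv m a s) = edge_point (val a).1 (val a).2 s.
Proof.
rewrite /pathv; case: eqP => [-> _|s_neq0 le_sm].
  by apply/ffunP => j; rewrite !ffunE; case: ((val a).1 j); case: ((val a).2 j); rewrite ?subn0.
case: insubP => [k _ Ek|] /=; first by rewrite Ek prednK //; lia.
rewrite -ltnS prednK; last by lia.
move=> s_ge; have -> : s = m by lia.
by apply/ffunP => j; rewrite !ffunE; case: ((val a).1 j); case: ((val a).2 j); rewrite ?subnn.
Qed.

Lemma stretch_point_le v j : stretch_point v j <= m.
Proof.
case: v => [x|[a k]]; rewrite /= !ffunE; first by case: (x j).
by have := ltn_ord k; case: ((val a).1 j); case: ((val a).2 j) => //; lia.
Qed.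

Lemma edge_point_flip x i s :
  edge_point x (flip_at x i) s = axis_point x i (if x i then m - s else s).
Proof.
apply/ffunP => j; rewrite !ffunE; case: eqP => [->|_]; last by case: (x j).
by case: (x i).
Qed.

Lemma sedge_flip (a : sedge e) : exists i, (val a).2 = flip_at (val a).1 i.
Proof. by case/andP: (valP a) => /cube_adjP. Qed.

Lemma stretch_point_inr (a : sedge e) (k : 'I_m.-1) i : (val a).2 = flip_at (val a).1 i ->
  stretch_point (inr (a, k)) = axis_point (val a).1 i (if (val a).1 i then m - k.+1 else k.+1).
Proof. by move=> /= ->; rewrite edge_point_flip. Qed.

Lemma interior_coord (k : 'I_m.-1) (b : bool) : 0 < (if b then m - k.+1 else k.+1) < m.
Proof. by have := ltn_ord k; case: b; lia. Qed.

Lemma stretch_point_inl_inr x (a : sedge e) k :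
  stretch_point (inl x) != stretch_point (inr (a, k)).
Proof.
have [i Ei] := sedge_flip a; rewrite (stretch_point_inr _ Ei).
apply/eqP => /ffunP/(_ i); rewrite !ffunE eqxx.
by have := interior_coord k ((val a).1 i); case: (x i); lia.
Qed.

Lemma stretch_point_inj : injective stretch_point.
Proof.
move=> [x|[a k]] [x'|[a' k']] E; first by move: E => /= /corner_inj ->.
- by have := stretch_point_inl_inr x a' k'; rewrite E eqxx.
- by have := stretch_point_inl_inr x' a k; rewrite E eqxx.
have [i Ei] := sedge_flip a; have [i' Ei'] := sedge_flip a'.
move: E; rewrite (stretch_point_inr _ Ei) (stretch_point_inr _ Ei') => /ffunP E.
have ii' : i' = i.
  apply/eqP; apply: contraT => /negbTE ne; move: (E i); rewrite !ffunE eqxx eq_sym ne.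
  by have := interior_coord k ((val a).1 i); case: ((val a').1 i); lia.
subst i'.
have Eoff j : j != i -> (val a).1 j = (val a').1 j.
  by move=> ne; move: (E j); rewrite !ffunE (negbTE ne); case: (_ j); case: (_ j) => //=; lia.
move/(_ i): E; rewrite !ffunE eqxx.
case: a => [[x y] Ha] in Ei Eoff *; case: a' => [[x' y'] Ha'] in Ei' Eoff *.
rewrite /= in Ei Ei' Eoff *; subst y y'.
have := ltn_ord k; have := ltn_ord k'.
case: (eqVneq (x i) (x' i)) => [xi|xi].
- have xx' : x = x'.
    by apply/ffunP => j; case: (eqVneq j i) => [->|/Eoff].
  subst x' => lt_k' lt_k Ek.
  have kk' : k = k' by apply: val_inj; case: (x i) Ek => /=; lia.
  by subst k'; congr (inr (_, _)); apply: val_inj.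
- have Ex' : x' = flip_at x i.
    apply/ffunP => j; rewrite ffunE; case: (eqVneq j i) => [->|ne]; last by rewrite addbF Eoff.
    by move: xi; case: (x i); case: (x' i).
  case/andP: (Ha) => _ /= lt; case/andP: (Ha') => _ /= gt.
  rewrite Ex' flip_atK in gt.
  by have := ltn_trans lt gt; rewrite ltnn.
Qed.

Lemma stretch_point_path_axis (a : sedge e) i s :
  (val a).2 = flip_at (val a).1 i -> s <= m ->
  stretch_point (pathv m a s) = axis_point (val a).1 i (if (val a).1 i then m - s else s).
Proof. by move=> Ei le_sm; rewrite stretch_point_path // Ei edge_point_flip. Qed.

Lemma axis_point_eq x x' i s :
  (forall j, j != i -> x j = x' j) -> axis_point x i s = axis_point x' i s.
Proof. by move=> E; apply/ffunP => j; rewrite !ffunE; case: eqP => // /eqP/E ->. Qed.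

Lemma stretch_adj_axis (u v : svert m e) : stretch_adj u v -> exists x i (t : 'I_m),
  (stretch_point u = axis_point x i t /\ stretch_point v = axis_point x i t.+1) \/
  (stretch_point u = axis_point x i t.+1 /\ stretch_point v = axis_point x i t).
Proof.
case/stretch_adjP => a [j uv]; have [i Ei] := sedge_flip a; exists (val a).1, i.
have lt_jm := ltn_ord j; have le_jm := ltnW lt_jm.
have Epath := stretch_point_path_axis Ei.
case: ((val a).1 i) in Epath *.
- have lt_tm : m - j.+1 < m by lia.
  exists (Ordinal lt_tm); rewrite /= (_ : (m - j.+1).+1 = m - j); last by lia.
  by case: uv => -[-> ->]; rewrite !Epath //; [right | left].
- by exists j; case: uv => -[-> ->]; rewrite !Epath //; [left | right].
Qed.

Lemma axis_stretch_adj x i (t : 'I_m) : exists u v : svert m e, stretch_adj u v /\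
  stretch_point u = axis_point x i t /\ stretch_point v = axis_point x i t.+1.
Proof.
have lt_tm := ltn_ord t; have le_tm := ltnW lt_tm.
have [x0 Ex0 x0i] : exists2 x0 : vertex, axis_point x0 i =1 axis_point x i & x0 i = false.
  exists [ffun j => if j == i then false else x j]; last by rewrite ffunE eqxx.
  by move=> s; apply: axis_point_eq => j /negbTE ne; rewrite ffunE ne.
have Ex0y : e x0 (flip_at x0 i) by apply/cube_adjP; exists i.
have [a [Ea|Ea]] : exists a : sedge e, val a = (x0, flip_at x0 i) \/ val a = (flip_at x0 i, x0).
  by apply: sedge_of_edge; [| rewrite cube_adjC | rewrite eq_sym flip_at_neq].
- have Ei : (val a).2 = flip_at (val a).1 i by rewrite Ea.
  have Epath := stretch_point_path_axis Ei.
  exists (pathv m a t), (pathv m a t.+1); rewrite stretch_adj_path !Epath //.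
  by rewrite Ea /= x0i 2!Ex0.
- have Ei : (val a).2 = flip_at (val a).1 i by rewrite Ea flip_atK.
  have Epath := stretch_point_path_axis Ei.
  have lt_sm : m - t.+1 < m by lia.
  exists (pathv m a (Ordinal lt_sm).+1), (pathv m a (Ordinal lt_sm)).
  rewrite stretch_adjC stretch_adj_path !Epath //= ?(ltnW lt_sm) //.
  have Eflip : axis_point (flip_at x0 i) i =1 axis_point x0 i.
    by move=> s; apply: axis_point_eq => j /negbTE ne; rewrite ffunE ne addbF.
  have -> : m - (m - t.+1).+1 = t by lia.
  have -> : m - (m - t.+1) = t.+1 by lia.
  by rewrite Ea /= ffunE eqxx x0i /= !Eflip 2!Ex0.
Qed.

End StretchedCubeInGrid.

Section BlockDecomposition.
Variables m q : nat.
Local Notation word := {ffun 'I_m -> bool}.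
Local Notation vertex := {ffun 'I_(m * q) -> bool}.
Implicit Types (X Y A B : vertex) (Z : 'I_q -> word).

Lemma card_block_index : #|{: 'I_m * 'I_q}| = m * q.
Proof. by rewrite card_prod !card_ord. Qed.

(* Q_(mq) = (Q_m)^q: coordinate [pos p j] is coordinate [p] of block [j]. *)
Definition pos (p : 'I_m) (j : 'I_q) : 'I_(m * q) :=
  cast_ord card_block_index (enum_rank (p, j)).

Definition unpos (n : 'I_(m * q)) : 'I_m * 'I_q := enum_val (cast_ord (esym card_block_index) n).

Lemma posK p j : unpos (pos p j) = (p, j).
Proof. by rewrite /unpos cast_ordK enum_rankK. Qed.

Lemma unposK n : pos (unpos n).1 (unpos n).2 = n.
Proof. by rewrite /pos -surjective_pairing enum_valK cast_ordKV. Qed.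

Definition glue Z : vertex := [ffun n => Z (unpos n).2 (unpos n).1].

Definition block X (j : 'I_q) : word := [ffun p => X (pos p j)].

Lemma glueK Z j : block (glue Z) j = Z j.
Proof. by apply/ffunP => p; rewrite !ffunE posK. Qed.

Lemma block_inj X Y : (forall j, block X j = block Y j) -> X = Y.
Proof.
move=> E; apply/ffunP => n; rewrite -(unposK n).
by move: (E (unpos n).2) => /ffunP/(_ (unpos n).1); rewrite !ffunE.
Qed.

Lemma eq_pos p j p' j' : (pos p j == pos p' j') = (p == p') && (j == j').
Proof.
rewrite -xpair_eqE; apply/eqP/eqP => [/(congr1 unpos)|[-> ->]] //.
by rewrite !posK.
Qed.

Lemma block_flip X p i j :
  block (flip_at X (pos p i)) j = if j == i then flip_at (block X j) p else block X j.
Proof.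
apply/ffunP => b; rewrite !ffunE eq_pos.
by case: (eqVneq j i) => [->|_]; rewrite ?andbT ?andbF ?ffunE ?addbF.
Qed.

Lemma cube_adj_posP X Y : reflect (exists p i, Y = flip_at X (pos p i)) (cube_adj X Y).
Proof.
apply: (iffP (cube_adjP _ _)) => [[n ->]|[p [i ->]]]; last by exists (pos p i).
by exists (unpos n).1, (unpos n).2; rewrite unposK.
Qed.

Lemma eq_set2_block A B A' B' j : [set A; B] = [set A'; B'] ->
  [set block A j; block B j] = [set block A' j; block B' j].
Proof. by case/eq_set2 => -[-> ->] //; rewrite setUC. Qed.

Lemma set2_blockwise X Y A B i :
  (forall j, j != i -> [/\ block X j = block A j, block Y j = block A j & block B j = block A j]) ->
  [set block X i; block Y i] = [set block A i; block B i] -> [set X; Y] = [set A; B].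
Proof.
move=> Eoff /eq_set2[[EX EY]|[EX EY]]; [|rewrite setUC]; congr [set _; _];
  apply: block_inj => j; case: (eqVneq j i) => [-> //|/Eoff[EXj EYj EBj]];
  by rewrite ?EXj ?EYj ?EBj.
Qed.

End BlockDecomposition.

Section CopiesOfTheStretchedCube.
Variables h q : nat.
Local Notation m := h.*2.+1.
Local Notation word := {ffun 'I_m -> bool}.
Local Notation vertex := {ffun 'I_(m * q) -> bool}.
Local Notation config := {ffun 'I_q -> word}.
Local Notation point := {ffun 'I_q -> nat}.
Local Notation axis_point := (axis_point m).
Implicit Types (c : config) (n : point) (x : {ffun 'I_q -> bool}) (i : 'I_q).

Definition embed c n : vertex := glue (fun j => walk (c j) (n j)).

Definition stretch_copy c (v : svert m (@cube_adj q)) : vertex := embed c (stretch_point v).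

Lemma block_embed c n j : block (embed c n) j = walk (c j) (n j).
Proof. exact: glueK. Qed.

Lemma block_embed_axis c x i s j :
  j != i -> block (embed c (axis_point x i s)) j = xor_const (c j) (x j).
Proof. by move=> /negbTE ne; rewrite block_embed !ffunE ne walk_corner. Qed.

Lemma embed_inj c n n' : (forall j, n j <= m) -> (forall j, n' j <= m) ->
  embed c n = embed c n' -> n = n'.
Proof.
move=> le_n le_n' E; apply/ffunP => j.
apply: (walk_inj (c := c j) (le_n j) (le_n' j)).
by move/(congr1 (fun X => block X j)): E; rewrite !block_embed.
Qed.

Lemma stretch_copy_inj c : injective (stretch_copy c).
Proof.
move=> u v /embed_inj E; apply: stretch_point_inj => //.
by apply: E => j; apply: stretch_point_le.
Qed.

Lemma embed_axisS c x i (t : 'I_m) : embed c (axis_point x i t.+1) =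
  flip_at (embed c (axis_point x i t)) (pos (flip_time (c i) t) i).
Proof.
apply: block_inj => j; rewrite block_flip !block_embed !ffunE.
by case: (eqVneq j i) => [->|_]; rewrite ?eqxx ?walkS.
Qed.

Lemma cube_adj_embed_axis c x i (t : 'I_m) :
  cube_adj (embed c (axis_point x i t)) (embed c (axis_point x i t.+1)).
Proof. by apply/cube_adj_posP; do 2 eexists; apply: embed_axisS. Qed.

Lemma stretch_copy_adj c u v : stretch_adj u v -> cube_adj (stretch_copy c u) (stretch_copy c v).
Proof.
case/stretch_adj_axis => // x [i [t [[Eu Ev]|[Eu Ev]]]]; rewrite /stretch_copy Eu Ev.
  exact: cube_adj_embed_axis.
by rewrite cube_adjC; apply: cube_adj_embed_axis.
Qed.

Definition axis_edge c x i (t : nat) : {set vertex} :=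
  [set embed c (axis_point x i t); embed c (axis_point x i t.+1)].

Lemma copy_edgesP c E : reflect (exists x i (t : 'I_m), E = axis_edge c x i t)
  (E \in copy_edges (@stretch_adj _ m (@cube_adj q)) (stretch_copy c)).
Proof.
apply: (iffP imsetP) => [[[u v]]|[x [i [t ->]]]].
  rewrite inE /= => /stretch_adj_axis[//|x [i [t [[Eu Ev]|[Eu Ev]]]]] ->; exists x, i, t;
    by rewrite /axis_edge /stretch_copy Eu Ev // setUC.
have [u [v [Euv [Eu Ev]]]] := @axis_stretch_adj m q (ltn0Sn _) x i t.
by exists (u, v); rewrite ?inE //= /stretch_copy Eu Ev.
Qed.

Lemma block_embed_axis_dir c x i (t : nat) :
  [set block (embed c (axis_point x i t)) i; block (embed c (axis_point x i t.+1)) i] =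
  [set walk (c i) t; walk (c i) t.+1].
Proof. by rewrite !block_embed !ffunE eqxx. Qed.

(* On an edge, the block in the edge direction determines [c i] through the
   antipodal walks; every other block is a constant [xor_const (c j) (x j)],
   which determines [c j] since [c j mid = false]. *)
Lemma axis_edge_config_inj c c' x x' i i' (t t' : 'I_m) :
  (forall j, c j (mid h) = false) -> (forall j, c' j (mid h) = false) ->
  axis_edge c x i t = axis_edge c' x' i' t' -> c = c'.
Proof.
move=> c_mid c'_mid E; have Eb j := eq_set2_block j E.
have ii' : i' = i.
  apply/eqP; apply: contraT => ne; move: (Eb i).
  rewrite block_embed_axis_dir !block_embed_axis 1?eq_sym //.
  by case/eq_set2 => -[E1 E2]; have := walkS_neq (c i) t; rewrite E1 E2 eqxx.
subst i'; apply/ffunP => j; case: (eqVneq j i) => [->|ne].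
  by move: (Eb i); rewrite !block_embed_axis_dir; apply: walk_edge_unique.
move: (Eb j); rewrite !block_embed_axis // => /eq_set2 -[[E1 _]|[E1 _]];
  by apply: (xor_const_inj (p := mid h) _ E1); rewrite c_mid c'_mid.
Qed.

Lemma axis_edge_cover X Y : cube_adj X Y -> exists c x i (t : 'I_m),
  (forall j, c j (mid h) = false) /\ [set X; Y] = axis_edge c x i t.
Proof.
case/cube_adj_posP => p [i ->].
have [ci [t [ci_mid Eci]]] := walk_edge_cover (block X i) p.
pose c : config := [ffun j => if j == i then ci else xor_const (block X j) (block X j (mid h))].
exists c, [ffun j => block X j (mid h)], i, t; split.
  by move=> j; rewrite ffunE; case: eqP => // _; rewrite ffunE addbb.
apply: (@set2_blockwise _ _ _ _ _ _ i).
  move=> j ne; rewrite block_flip (negbTE ne) !block_embed_axis // !ffunE (negbTE ne).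
  by rewrite xor_constK.
by rewrite block_flip eqxx block_embed_axis_dir ffunE eqxx.
Qed.

Definition normal_configs : {set config} := [set c : config | [forall j, ~~ c j (mid h)]].

Lemma stretched_cube_divides : divides (@stretch_adj _ m (@cube_adj q)) (@cube_adj (m * q)).
Proof.
have c_mid (k : 'I_#|normal_configs|) j : enum_val k j (mid h) = false.
  by apply/negbTE; move: (enum_valP k); rewrite inE => /forallP.
exists #|normal_configs|, (fun k => stretch_copy (enum_val k)); split; [|split].
- by move=> k; split; [apply: stretch_copy_inj | apply: stretch_copy_adj].
- move=> k k' ne; rewrite disjoint_subset; apply/subsetP => E /copy_edgesP[x [i [t ->]]].
  rewrite inE; apply: contra ne => /copy_edgesP[x' [i' [t' E']]].
  by rewrite -(inj_eq enum_val_inj) (axis_edge_config_inj (c_mid k) (c_mid k') E').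
- apply/eqP; rewrite eqEsubset; apply/andP; split.
  + apply/bigcupsP => k _; apply/subsetP => E /copy_edgesP[x [i [t ->]]].
    apply/imsetP; exists (embed (enum_val k) (axis_point x i t),
                          embed (enum_val k) (axis_point x i t.+1)) => //.
    by rewrite inE /= cube_adj_embed_axis.
  + apply/subsetP => E /imsetP[[X Y]]; rewrite inE /= => XY ->.
    have [c [x [i [t [c_mid' ->]]]]] := axis_edge_cover XY.
    have cP : c \in normal_configs by rewrite inE; apply/forallP => j; rewrite c_mid'.
    apply/bigcupP; exists (enum_rank_in cP c) => //; rewrite enum_rankK_in //.
    by apply/copy_edgesP; exists x, i, t.
Qed.

End CopiesOfTheStretchedCube.

Theorem proposition1 (m q : nat) :
  odd m -> 0 < q -> divides (@stretch_adj _ m (@cube_adj q)) (@cube_adj (m * q)).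
Proof.
move=> odd_m _; rewrite -[m]odd_double_half odd_m add1n.
exact: stretched_cube_divides.
Qed.
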